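(* For all $\lambda\mu\mathrm{T}$-terms $t_1,t_2,t_3$: if $t_1\to_B t_2\to_A t_3$, then there is a term $t_4$ with $t_1\to_A t_4$ and $t_4\twoheadrightarrow_{AB}t_3$. Consequently, if $t_1\twoheadrightarrow_B t_2\to_A t_3$, then there is $t_4$ with $t_1\to_A t_4\twoheadrightarrow_{AB} t_3$.
   Context: The calculus $\lambda\mu\mathrm{T}$ (raw terms). Types: $\rho,\sigma,\tau ::= \mathbb{N} \mid \sigma\to\tau$. Over infinite sets of $\lambda$-variables $x,y,\dots$ and $\mu$-variables $\alpha,\beta,\gamma,\dots$, terms and commands are mutually defined by $t,r,s ::= x \mid \lambda x{:}\rho.r \mid t\,s \mid \mu\alpha{:}\rho.c \mid 0 \mid \mathsf{S}\,t \mid \mathsf{nrec}_\rho\ r\ s\ t$ and $c ::= [\alpha]t$. Terms are considered modulo renaming of bound variables; $FCV(t)$ = free $\mu$-variables; $t[x:=r]$ is capture-avoiding substitution. Numerals: $\underline{n} := \mathsf{S}^n 0$. Contexts: $E ::= \Box \mid E\,t \mid \mathsf{S}\,E \mid \mathsf{nrec}\ r\ s\ E$; $E[u]$ fills the hole with $u$. Structural substitution $t[\alpha:=\beta E]$ is homomorphic on all constructs (capture-avoiding) except $([\alpha]u)[\alpha:=\beta E] := [\beta]E[u[\alpha:=\beta E]]$ (and $([\gamma]u)[\alpha:=\beta E]:=[\gamma](u[\alpha:=\beta E])$ for $\gamma\neq\alpha$). $\to_A$ is the compatible closure (on terms and commands) of: $(\lambda x.t)r\to t[x:=r]$; $\mathsf{S}(\mu\alpha.c)\to\mu\alpha.c[\alpha:=\alpha(\mathsf{S}\,\Box)]$;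 $(\mu\alpha.c)s\to\mu\alpha.c[\alpha:=\alpha(\Box\,s)]$; $\mathsf{nrec}\ r\ s\ 0\to r$; $\mathsf{nrec}\ r\ s\ (\mathsf{S}\,\underline{n})\to s\ \underline{n}\ (\mathsf{nrec}\ r\ s\ \underline{n})$; $\mathsf{nrec}\ r\ s\ (\mu\alpha.c)\to\mu\alpha.c[\alpha:=\alpha(\mathsf{nrec}\ r\ s\ \Box)]$. $\to_B$ is the compatible closure of $\mu\alpha.[\alpha]t\to t$ (if $\alpha\notin FCV(t)$) and $[\alpha]\mu\beta.c\to c[\beta:=\alpha\,\Box]$. $\to_{AB}:=\to_A\cup\to_B$; $\twoheadrightarrow_X$ denotes the reflexive–transitive closure of $\to_X$. *)

(* The calculus lambda-mu-T, raw terms, locally nameless via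
   de Bruijn indices (two separate index spaces: lambda-variables and
   mu-variables). *)
From Stdlib Require Import Arith Relations.

(* Types (kept for reference; reduction does not depend on them). *)
Inductive ty : Type := TNat | TArr (s t : ty).

(* Terms and commands.  [var n]: lambda-variable (de Bruijn index);
   [lam t]: lambda x. t (binds lambda-index 0 in t);
   [mu c]: mu alpha. c (binds mu-index 0 in c);
   [named a t]: the command [a] t with a a mu-variable index. *)
Inductive tm : Type :=
| var (n : nat)
| lam (t : tm)
| app (t s : tm)
| mu (c : cmd)
| zero
| succ (t : tm)
| nrec (r s t : tm)
with cmd : Type :=
| named (a : nat) (t : tm).

Fixpoint numeral (n : nat) : tm :=
  match n with O => zero | S n => succ (numeral n) end.

Fixpoint lift (k : nat) (t : tm) : tm :=
  match t with
  | var n => if k <=? n then var (S n) else var n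
  | lam t => lam (lift (S k) t)
  | app t s => app (lift k t) (lift k s)
  | mu c => mu (lift_c k c)
  | zero => zero
  | succ t => succ (lift k t)
  | nrec r s t => nrec (lift k r) (lift k s) (lift k t)
  end
with lift_c (k : nat) (c : cmd) : cmd :=
  match c with named a t => named a (lift k t) end.

Fixpoint mlift (k : nat) (t : tm) : tm :=
  match t with
  | var n => var n
  | lam t => lam (mlift k t)
  | app t s => app (mlift k t) (mlift k s)
  | mu c => mu (mlift_c (S k) c)
  | zero => zero
  | succ t => succ (mlift k t)
  | nrec r s t => nrec (mlift k r) (mlift k s) (mlift k t)
  end
with mlift_c (k : nat) (c : cmd) : cmd :=
  match c with
  | named a t => named (if k <=? a then S a else a) (mlift k t)
  end.

(* removal of an (unused) mu-variable k: free mu-variables > k decrease *)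
Fixpoint mlower (k : nat) (t : tm) : tm :=
  match t with
  | var n => var n
  | lam t => lam (mlower k t)
  | app t s => app (mlower k t) (mlower k s)
  | mu c => mu (mlower_c (S k) c)
  | zero => zero
  | succ t => succ (mlower k t)
  | nrec r s t => nrec (mlower k r) (mlower k s) (mlower k t)
  end
with mlower_c (k : nat) (c : cmd) : cmd :=
  match c with
  | named a t => named (if k <? a then pred a else a) (mlower k t)
  end.

Fixpoint mfree (k : nat) (t : tm) : bool :=
  match t with
  | var _ => false
  | lam t => mfree k t
  | app t s => mfree k t || mfree k s
  | mu c => mfree_c (S k) c
  | zero => false
  | succ t => mfree k t
  | nrec r s t => mfree k r || mfree k s || mfree k t
  end
with mfree_c (k : nat) (c : cmd) : bool :=
  match c with named a t => (a =? k) || mfree k t end.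

(* capture-avoiding substitution t[j := r] of the lambda-variable j,
   with free lambda-variables above j decremented (the binder is consumed) *)
Fixpoint subst (j : nat) (r : tm) (t : tm) : tm :=
  match t with
  | var n => if n =? j then r else if j <? n then var (pred n) else var n
  | lam t => lam (subst (S j) (lift 0 r) t)
  | app t s => app (subst j r t) (subst j r s)
  | mu c => mu (subst_c j (mlift 0 r) c)
  | zero => zero
  | succ t => succ (subst j r t)
  | nrec r' s t => nrec (subst j r r') (subst j r s) (subst j r t)
  end
with subst_c (j : nat) (r : tm) (c : cmd) : cmd :=
  match c with named a t => named a (subst j r t) end.

Inductive ctx : Type :=
| Hole
| CApp (E : ctx) (t : tm)
| CSucc (E : ctx)
| CNrec (r s : tm) (E : ctx).

Fixpoint plug (E : ctx) (u : tm) : tm :=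
  match E with
  | Hole => u
  | CApp E t => app (plug E u) t
  | CSucc E => succ (plug E u)
  | CNrec r s E => nrec r s (plug E u)
  end.

Fixpoint liftE (k : nat) (E : ctx) : ctx :=
  match E with
  | Hole => Hole
  | CApp E t => CApp (liftE k E) (lift k t)
  | CSucc E => CSucc (liftE k E)
  | CNrec r s E => CNrec (lift k r) (lift k s) (liftE k E)
  end.

Fixpoint mliftE (k : nat) (E : ctx) : ctx :=
  match E with
  | Hole => Hole
  | CApp E t => CApp (mliftE k E) (mlift k t)
  | CSucc E => CSucc (mliftE k E)
  | CNrec r s E => CNrec (mlift k r) (mlift k s) (mliftE k E)
  end.

(* structural substitution t[j := b E]: every command [j]u becomes
   [b] E[u[j := b E]]; other commands are traversed homomorphically.
   (Capture avoidance: indices and the terms of E are shifted under binders.) *)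
Fixpoint ssub (j b : nat) (E : ctx) (t : tm) : tm :=
  match t with
  | var n => var n
  | lam t => lam (ssub j b (liftE 0 E) t)
  | app t s => app (ssub j b E t) (ssub j b E s)
  | mu c => mu (ssub_c (S j) (S b) (mliftE 0 E) c)
  | zero => zero
  | succ t => succ (ssub j b E t)
  | nrec r s t => nrec (ssub j b E r) (ssub j b E s) (ssub j b E t)
  end
with ssub_c (j b : nat) (E : ctx) (c : cmd) : cmd :=
  match c with
  | named a u =>
      if a =? j then named b (plug E (ssub j b E u))
      else named a (ssub j b E u)
  end.

Inductive rootA : tm -> tm -> Prop :=
| rA_beta t r : rootA (app (lam t) r) (subst 0 r t)
| rA_succ c : rootA (succ (mu c)) (mu (ssub_c 0 0 (CSucc Hole) c))
| rA_app c s : rootA (app (mu c) s) (mu (ssub_c 0 0 (CApp Hole (mlift 0 s)) c))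
| rA_nrec0 r s : rootA (nrec r s zero) r
| rA_nrecS r s n :
    rootA (nrec r s (succ (numeral n)))
          (app (app s (numeral n)) (nrec r s (numeral n)))
| rA_nrecmu r s c :
    rootA (nrec r s (mu c))
          (mu (ssub_c 0 0 (CNrec (mlift 0 r) (mlift 0 s) Hole) c)).

Inductive rootA_c : cmd -> cmd -> Prop := .

Inductive rootB : tm -> tm -> Prop :=
| rB_eta t : mfree 0 t = false -> rootB (mu (named 0 t)) (mlower 0 t).

Inductive rootB_c : cmd -> cmd -> Prop :=
| rB_named a c : rootB_c (named a (mu c)) (mlower_c 0 (ssub_c 0 (S a) Hole c)).

Inductive compat (R : tm -> tm -> Prop) (Rc : cmd -> cmd -> Prop)
  : tm -> tm -> Prop :=
| c_root t t' : R t t' -> compat R Rc t t'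
| c_lam t t' : compat R Rc t t' -> compat R Rc (lam t) (lam t')
| c_appl t t' s : compat R Rc t t' -> compat R Rc (app t s) (app t' s)
| c_appr t s s' : compat R Rc s s' -> compat R Rc (app t s) (app t s')
| c_mu c c' : compat_c R Rc c c' -> compat R Rc (mu c) (mu c')
| c_succ t t' : compat R Rc t t' -> compat R Rc (succ t) (succ t')
| c_nrec1 r r' s t : compat R Rc r r' -> compat R Rc (nrec r s t) (nrec r' s t)
| c_nrec2 r s s' t : compat R Rc s s' -> compat R Rc (nrec r s t) (nrec r s' t)
| c_nrec3 r s t t' : compat R Rc t t' -> compat R Rc (nrec r s t) (nrec r s t')
with compat_c (R : tm -> tm -> Prop) (Rc : cmd -> cmd -> Prop)
  : cmd -> cmd -> Prop :=
| cc_root c c' : Rc c c' -> compat_c R Rc c c'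
| cc_named a t t' : compat R Rc t t' -> compat_c R Rc (named a t) (named a t').

Definition stepA : tm -> tm -> Prop := compat rootA rootA_c.
Definition stepB : tm -> tm -> Prop := compat rootB rootB_c.
Definition stepAB (t u : tm) : Prop := stepA t u \/ stepB t u.

Definition redB : tm -> tm -> Prop := clos_refl_trans tm stepB.
Definition redAB : tm -> tm -> Prop := clos_refl_trans tm stepAB.

From Stdlib Require Import Arith Relations Lia FunctionalExtensionality.

(* The multi-step version
   follows by moving the A-step backwards over the B-steps one at a time.

   The one-step version is proved by induction on the B-step t1 -> t2,
   inspecting where the A-step of t2 happens.  Steps at disjoint or nested
   positions commute by substitutivity: a B-step survives every renaming and
   substitution (for a structural substitution, after a mu has been pulled out
   of a context).  The genuine critical pairs are
   - an eta-step E[mu a.[a]x] -> E[x] followed by an A-step of E[x]: A-steps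
     pull the mu out of E, the A-step is done inside it, an eta-step ends;
   - a renaming step [a]mu b.c -> c[b:=a] followed by an A-step: A-steps are
     reflected by renamings of mu-variables. *)

Scheme tm_ind2 := Induction for tm Sort Prop
  with cmd_ind2 := Induction for cmd Sort Prop.
Combined Scheme tm_cmd_ind from tm_ind2, cmd_ind2.

Definition up_ren (xi : nat -> nat) (n : nat) : nat :=
  match n with 0 => 0 | S n => S (xi n) end.

Fixpoint ren (xi : nat -> nat) (t : tm) : tm :=
  match t with
  | var n => var (xi n)
  | lam t => lam (ren (up_ren xi) t)
  | app t s => app (ren xi t) (ren xi s)
  | mu c => mu (ren_c xi c)
  | zero => zero
  | succ t => succ (ren xi t)
  | nrec r s t => nrec (ren xi r) (ren xi s) (ren xi t)
  end
with ren_c (xi : nat -> nat) (c : cmd) : cmd :=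
  match c with named a t => named a (ren xi t) end.

Fixpoint renE (xi : nat -> nat) (E : ctx) : ctx :=
  match E with
  | Hole => Hole
  | CApp E t => CApp (renE xi E) (ren xi t)
  | CSucc E => CSucc (renE xi E)
  | CNrec r s E => CNrec (ren xi r) (ren xi s) (renE xi E)
  end.

Fixpoint mren (z : nat -> nat) (t : tm) : tm :=
  match t with
  | var n => var n
  | lam t => lam (mren z t)
  | app t s => app (mren z t) (mren z s)
  | mu c => mu (mren_c (up_ren z) c)
  | zero => zero
  | succ t => succ (mren z t)
  | nrec r s t => nrec (mren z r) (mren z s) (mren z t)
  end
with mren_c (z : nat -> nat) (c : cmd) : cmd :=
  match c with named a t => named (z a) (mren z t) end.

Fixpoint mrenE (z : nat -> nat) (E : ctx) : ctx :=
  match E with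
  | Hole => Hole
  | CApp E t => CApp (mrenE z E) (mren z t)
  | CSucc E => CSucc (mrenE z E)
  | CNrec r s E => CNrec (mren z r) (mren z s) (mrenE z E)
  end.

(* A structural assignment [th] sends the mu-variable a to a pair (b, E):
   every command [a]u becomes [b]E[u].  These are its liftings under a
   lambda-binder and under a mu-binder. *)
Definition th_lam (th : nat -> nat * ctx) (a : nat) : nat * ctx :=
  (fst (th a), renE S (snd (th a))).
Definition th_mu (th : nat -> nat * ctx) (a : nat) : nat * ctx :=
  match a with
  | 0 => (0, Hole)
  | S a => (S (fst (th a)), mrenE S (snd (th a)))
  end.

Fixpoint msub (th : nat -> nat * ctx) (t : tm) : tm :=
  match t with
  | var n => var n
  | lam t => lam (msub (th_lam th) t)
  | app t s => app (msub th t) (msub th s)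
  | mu c => mu (msub_c (th_mu th) c)
  | zero => zero
  | succ t => succ (msub th t)
  | nrec r s t => nrec (msub th r) (msub th s) (msub th t)
  end
with msub_c (th : nat -> nat * ctx) (c : cmd) : cmd :=
  match c with named a u => named (fst (th a)) (plug (snd (th a)) (msub th u)) end.

Fixpoint msubE (th : nat -> nat * ctx) (E : ctx) : ctx :=
  match E with
  | Hole => Hole
  | CApp E t => CApp (msubE th E) (msub th t)
  | CSucc E => CSucc (msubE th E)
  | CNrec r s E => CNrec (msub th r) (msub th s) (msubE th E)
  end.

Definition up_sub (s : nat -> tm) (n : nat) : tm :=
  match n with 0 => var 0 | S n => ren S (s n) end.

Fixpoint lsub (s : nat -> tm) (t : tm) : tm :=
  match t with
  | var n => s n
  | lam t => lam (lsub (up_sub s) t)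
  | app t u => app (lsub s t) (lsub s u)
  | mu c => mu (lsub_c (fun n => mren S (s n)) c)
  | zero => zero
  | succ t => succ (lsub s t)
  | nrec r u t => nrec (lsub s r) (lsub s u) (lsub s t)
  end
with lsub_c (s : nat -> tm) (c : cmd) : cmd :=
  match c with named a u => named a (lsub s u) end.

Fixpoint ccomp (F E : ctx) : ctx :=
  match F with
  | Hole => E
  | CApp F t => CApp (ccomp F E) t
  | CSucc F => CSucc (ccomp F E)
  | CNrec r s F => CNrec r s (ccomp F E)
  end.

Lemma plug_ccomp F E u : plug (ccomp F E) u = plug F (plug E u).
Proof. induction F; simpl; congruence. Qed.
Lemma plug_ren xi E u : ren xi (plug E u) = plug (renE xi E) (ren xi u).
Proof. induction E; simpl; congruence. Qed.
Lemma plug_mren z E u : mren z (plug E u) = plug (mrenE z E) (mren z u).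
Proof. induction E; simpl; congruence. Qed.
Lemma plug_msub th E u : msub th (plug E u) = plug (msubE th E) (msub th u).
Proof. induction E; simpl; congruence. Qed.

Lemma ren_ren :
  (forall t xi xi', ren xi (ren xi' t) = ren (fun n => xi (xi' n)) t) /\
  (forall c xi xi', ren_c xi (ren_c xi' c) = ren_c (fun n => xi (xi' n)) c).
Proof.
  apply tm_cmd_ind; intros; simpl; try solve [f_equal; eauto].
  rewrite H. f_equal. f_equal. extensionality n; destruct n; reflexivity.
Qed.

Lemma mren_mren :
  (forall t z z', mren z (mren z' t) = mren (fun n => z (z' n)) t) /\
  (forall c z z', mren_c z (mren_c z' c) = mren_c (fun n => z (z' n)) c).
Proof.
  apply tm_cmd_ind; intros; simpl; try solve [f_equal; eauto].
  rewrite H. f_equal. f_equal. extensionality n; destruct n; reflexivity.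
Qed.

Lemma ren_mren :
  (forall t xi z, ren xi (mren z t) = mren z (ren xi t)) /\
  (forall c xi z, ren_c xi (mren_c z c) = mren_c z (ren_c xi c)).
Proof. apply tm_cmd_ind; intros; simpl; try solve [f_equal; eauto]. Qed.

Lemma mren_id :
  (forall t, mren (fun n => n) t = t) /\ (forall c, mren_c (fun n => n) c = c).
Proof.
  apply tm_cmd_ind; intros; simpl; try solve [f_equal; eauto].
  replace (up_ren (fun n => n)) with (fun n : nat => n)
    by (extensionality n; destruct n; reflexivity).
  congruence.
Qed.

Lemma renE_ren xi xi' E : renE xi (renE xi' E) = renE (fun n => xi (xi' n)) E.
Proof. induction E; simpl; rewrite ?(proj1 ren_ren); congruence. Qed.
Lemma mrenE_mren z z' E : mrenE z (mrenE z' E) = mrenE (fun n => z (z' n)) E.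
Proof. induction E; simpl; rewrite ?(proj1 mren_mren); congruence. Qed.
Lemma renE_mren xi z E : renE xi (mrenE z E) = mrenE z (renE xi E).
Proof. induction E; simpl; rewrite ?(proj1 ren_mren); congruence. Qed.
Lemma mrenE_id E : mrenE (fun n => n) E = E.
Proof. induction E; simpl; rewrite ?(proj1 mren_id); congruence. Qed.
Lemma renE_ccomp xi F E : renE xi (ccomp F E) = ccomp (renE xi F) (renE xi E).
Proof. induction F; simpl; congruence. Qed.
Lemma mrenE_ccomp z F E : mrenE z (ccomp F E) = ccomp (mrenE z F) (mrenE z E).
Proof. induction F; simpl; congruence. Qed.
Lemma ccomp_Hole E : ccomp E Hole = E.
Proof. induction E; simpl; congruence. Qed.
Lemma ccomp_assoc F E G : ccomp (ccomp F E) G = ccomp F (ccomp E G).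
Proof. induction F; simpl; congruence. Qed.

Definition th_ren (xi : nat -> nat) (th : nat -> nat * ctx) (a : nat) : nat * ctx :=
  (fst (th a), renE xi (snd (th a))).

Lemma ren_msub :
  (forall t xi th, ren xi (msub th t) = msub (th_ren xi th) (ren xi t)) /\
  (forall c xi th, ren_c xi (msub_c th c) = msub_c (th_ren xi th) (ren_c xi c)).
Proof.
  apply tm_cmd_ind; intros; simpl; try solve [f_equal; eauto].
  - rewrite H. f_equal. f_equal. extensionality a. unfold th_ren, th_lam; simpl.
    rewrite !renE_ren. reflexivity.
  - rewrite H. f_equal. f_equal. extensionality a. unfold th_ren, th_mu.
    destruct a; simpl; [reflexivity | rewrite renE_mren; reflexivity].
  - rewrite plug_ren, H. reflexivity.
Qed.

Lemma msub_mren :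
  (forall t th z, msub th (mren z t) = msub (fun a => th (z a)) t) /\
  (forall c th z, msub_c th (mren_c z c) = msub_c (fun a => th (z a)) c).
Proof.
  apply tm_cmd_ind; intros; simpl; try solve [f_equal; eauto].
  all: rewrite H; repeat f_equal; extensionality a; destruct a; reflexivity.
Qed.

Definition th_mren (z : nat -> nat) (th : nat -> nat * ctx) (a : nat) : nat * ctx :=
  (z (fst (th a)), mrenE z (snd (th a))).

Lemma mren_msub :
  (forall t th z, mren z (msub th t) = msub (th_mren z th) t) /\
  (forall c th z, mren_c z (msub_c th c) = msub_c (th_mren z th) c).
Proof.
  apply tm_cmd_ind; intros; simpl; try solve [f_equal; eauto].
  - rewrite H. f_equal. f_equal. extensionality a. unfold th_mren, th_lam; simpl.
    rewrite renE_mren. reflexivity.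
  - rewrite H. f_equal. f_equal. extensionality a. unfold th_mren, th_mu.
    destruct a; simpl; [reflexivity | rewrite !mrenE_mren; reflexivity].
  - rewrite plug_mren, H. reflexivity.
Qed.

Lemma msubE_mren th z E : msubE th (mrenE z E) = msubE (fun a => th (z a)) E.
Proof. induction E; simpl; rewrite ?(proj1 msub_mren); congruence. Qed.
Lemma mrenE_msub z th E : mrenE z (msubE th E) = msubE (th_mren z th) E.
Proof. induction E; simpl; rewrite ?(proj1 mren_msub); congruence. Qed.
Lemma renE_msub xi th E : renE xi (msubE th E) = msubE (th_ren xi th) (renE xi E).
Proof. induction E; simpl; rewrite ?(proj1 ren_msub); congruence. Qed.

Definition th_comp (th1 th2 : nat -> nat * ctx) (a : nat) : nat * ctx :=
  (fst (th2 (fst (th1 a))),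
   ccomp (snd (th2 (fst (th1 a)))) (msubE th2 (snd (th1 a)))).

Lemma msub_msub :
  (forall t th1 th2, msub th2 (msub th1 t) = msub (th_comp th1 th2) t) /\
  (forall c th1 th2, msub_c th2 (msub_c th1 c) = msub_c (th_comp th1 th2) c).
Proof.
  apply tm_cmd_ind; intros; simpl; try solve [f_equal; eauto].
  - rewrite H. f_equal. f_equal. extensionality a. unfold th_comp, th_lam; simpl.
    rewrite renE_ccomp, renE_msub. reflexivity.
  - rewrite H. f_equal. f_equal. extensionality a. unfold th_comp, th_mu.
    destruct a; simpl; [reflexivity |].
    rewrite mrenE_ccomp, mrenE_msub, msubE_mren. reflexivity.
  - rewrite plug_msub, H, plug_ccomp. reflexivity.
Qed.

Lemma msub_renaming :
  (forall t z, msub (fun a => (z a, Hole)) t = mren z t) /\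
  (forall c z, msub_c (fun a => (z a, Hole)) c = mren_c z c).
Proof.
  apply tm_cmd_ind; intros; simpl; try solve [f_equal; eauto].
  all: rewrite <- H; repeat f_equal; extensionality a; destruct a; reflexivity.
Qed.

Lemma msubE_renaming z E : msubE (fun a => (z a, Hole)) E = mrenE z E.
Proof. induction E; simpl; rewrite ?(proj1 msub_renaming); congruence. Qed.

Lemma mren_lsub :
  (forall t s z, mren z (lsub s t) = lsub (fun n => mren z (s n)) (mren z t)) /\
  (forall c s z, mren_c z (lsub_c s c) = lsub_c (fun n => mren z (s n)) (mren_c z c)).
Proof.
  apply tm_cmd_ind; intros; simpl; try solve [f_equal; eauto].
  all: rewrite H; repeat f_equal; extensionality n; try destruct n; simpl; try reflexivity.
  all: rewrite ?(proj1 ren_mren), ?(proj1 mren_mren); reflexivity.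
Qed.

Definition shift_from (k n : nat) : nat := if k <=? n then S n else n.
Definition unshift_from (k n : nat) : nat := if k <? n then pred n else n.
Definition beta_sub (j : nat) (r : tm) (n : nat) : tm :=
  if n =? j then r else if j <? n then var (pred n) else var n.
Definition th_single (j b : nat) (E : ctx) (a : nat) : nat * ctx :=
  if a =? j then (b, E) else (a, Hole).

Lemma up_ren_shift_from k : up_ren (shift_from k) = shift_from (S k).
Proof.
  extensionality n; destruct n; unfold shift_from; simpl; auto.
  destruct (k <=? n); auto.
Qed.

Lemma up_ren_unshift_from k : up_ren (unshift_from k) = unshift_from (S k).
Proof.
  extensionality n; destruct n as [|n]; unfold unshift_from; simpl; auto.
  destruct n; simpl; [destruct k; reflexivity |].
  destruct (Nat.ltb_spec k (S n)), (Nat.ltb_spec (S k) (S (S n))); simpl; auto; lia.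
Qed.

Lemma shift_from_0 : shift_from 0 = S.
Proof. reflexivity. Qed.

Lemma unshift_from_0 : unshift_from 0 = pred.
Proof. extensionality n; destruct n; reflexivity. Qed.

Lemma lift_ren :
  (forall t k, lift k t = ren (shift_from k) t) /\
  (forall c k, lift_c k c = ren_c (shift_from k) c).
Proof.
  apply tm_cmd_ind; intros; simpl; try solve [f_equal; eauto].
  all: try (rewrite H, up_ren_shift_from; reflexivity).
  all: unfold shift_from; try destruct (_ <=? _); f_equal; eauto.
Qed.

Lemma mlift_mren :
  (forall t k, mlift k t = mren (shift_from k) t) /\
  (forall c k, mlift_c k c = mren_c (shift_from k) c).
Proof.
  apply tm_cmd_ind; intros; simpl; try solve [f_equal; eauto].
  all: try (rewrite H, up_ren_shift_from; reflexivity).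
  all: unfold shift_from; f_equal; eauto.
Qed.

Lemma mlower_mren :
  (forall t k, mlower k t = mren (unshift_from k) t) /\
  (forall c k, mlower_c k c = mren_c (unshift_from k) c).
Proof.
  apply tm_cmd_ind; intros; simpl; try solve [f_equal; eauto].
  all: try (rewrite H, up_ren_unshift_from; reflexivity).
  all: unfold unshift_from; f_equal; eauto.
Qed.

Lemma liftE_ren k E : liftE k E = renE (shift_from k) E.
Proof. induction E; simpl; rewrite ?(proj1 lift_ren); congruence. Qed.

Lemma mliftE_mren k E : mliftE k E = mrenE (shift_from k) E.
Proof. induction E; simpl; rewrite ?(proj1 mlift_mren); congruence. Qed.

Lemma subst_lsub :
  (forall t j r, subst j r t = lsub (beta_sub j r) t) /\
  (forall c j r, subst_c j r c = lsub_c (beta_sub j r) c).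
Proof.
  apply tm_cmd_ind; intros; simpl; try solve [f_equal; eauto].
  - rewrite H. f_equal. f_equal. extensionality n. rewrite (proj1 lift_ren).
    unfold beta_sub, up_sub. destruct n; simpl; [reflexivity |].
    change (S j <? S n) with (j <? n).
    destruct (n =? j); auto. destruct (Nat.ltb_spec j n); simpl; auto.
    destruct n; simpl; auto; lia.
  - rewrite H. f_equal. f_equal. extensionality n. rewrite (proj1 mlift_mren).
    unfold beta_sub. destruct (n =? j); auto. destruct (j <? n); reflexivity.
Qed.

Lemma ssub_msub :
  (forall t j b E, ssub j b E t = msub (th_single j b E) t) /\
  (forall c j b E, ssub_c j b E c = msub_c (th_single j b E) c).
Proof.
  apply tm_cmd_ind; intros; simpl; try solve [f_equal; eauto].
  - rewrite H. f_equal. f_equal. extensionality a. rewrite liftE_ren.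
    unfold th_single, th_lam. destruct (a =? j); reflexivity.
  - rewrite H. f_equal. f_equal. extensionality a. rewrite mliftE_mren.
    unfold th_single, th_mu. destruct a; simpl; [reflexivity |].
    destruct (a =? j); reflexivity.
  - unfold th_single. destruct (a =? j); simpl; rewrite H; reflexivity.
Qed.

Lemma mfree_mlift :
  (forall t k, mfree k (mlift k t) = false) /\
  (forall c k, mfree_c k (mlift_c k c) = false).
Proof.
  apply tm_cmd_ind; intros; simpl; rewrite ?H, ?H0, ?H1; auto.
  destruct (Nat.leb_spec k a); apply Bool.orb_false_iff; split; auto;
    apply Nat.eqb_neq; lia.
Qed.

Lemma mlower_mlift :
  (forall t k, mlower k (mlift k t) = t) /\
  (forall c k, mlower_c k (mlift_c k c) = c).
Proof.
  apply tm_cmd_ind; intros; simpl; rewrite ?H, ?H0, ?H1; auto.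
  f_equal. destruct (Nat.leb_spec k a);
    [destruct (Nat.ltb_spec k (S a)) | destruct (Nat.ltb_spec k a)]; simpl; lia.
Qed.

Lemma mlift_mlower :
  (forall t k, mfree k t = false -> mlift k (mlower k t) = t) /\
  (forall c k, mfree_c k c = false -> mlift_c k (mlower_c k c) = c).
Proof.
  apply tm_cmd_ind; intros; simpl in *;
    repeat match goal with H : orb _ _ = false |- _ =>
      apply Bool.orb_false_iff in H; destruct H end;
    try solve [f_equal; eauto].
  apply Nat.eqb_neq in H0. f_equal; auto.
  destruct (Nat.ltb_spec k a);
    [destruct (Nat.leb_spec k (pred a)) | destruct (Nat.leb_spec k a)]; simpl; lia.
Qed.

Definition th_top (E : ctx) (a : nat) : nat * ctx :=
  match a with 0 => (0, E) | S n => (S n, Hole) end.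
Definition rename_top (a n : nat) : nat := match n with 0 => a | S n => n end.

Inductive rootA' : tm -> tm -> Prop :=
| rA'_beta t r : rootA' (app (lam t) r) (lsub (beta_sub 0 r) t)
| rA'_succ c : rootA' (succ (mu c)) (mu (msub_c (th_top (CSucc Hole)) c))
| rA'_app c s :
    rootA' (app (mu c) s) (mu (msub_c (th_top (CApp Hole (mren S s))) c))
| rA'_nrec0 r s : rootA' (nrec r s zero) r
| rA'_nrecS r s n :
    rootA' (nrec r s (succ (numeral n)))
           (app (app s (numeral n)) (nrec r s (numeral n)))
| rA'_nrecmu r s c :
    rootA' (nrec r s (mu c))
           (mu (msub_c (th_top (CNrec (mren S r) (mren S s) Hole)) c)).

Inductive rootB' : tm -> tm -> Prop :=
| rB'_eta t : rootB' (mu (named 0 (mren S t))) t.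

Inductive rootBc' : cmd -> cmd -> Prop :=
| rB'_named a c : rootBc' (named a (mu c)) (mren_c (rename_top a) c).

Lemma th_single_top E : th_single 0 0 E = th_top E.
Proof. extensionality a; destruct a; reflexivity. Qed.

Lemma rootA_iff t u : rootA t u <-> rootA' t u.
Proof.
  split; intro H; destruct H;
    rewrite ?(proj1 subst_lsub), ?(proj2 ssub_msub), ?th_single_top,
      ?(proj1 mlift_mren), ?shift_from_0;
    try constructor.
  all: rewrite <- ?shift_from_0, <- ?(proj1 mlift_mren), <- ?th_single_top,
         <- ?(proj2 ssub_msub), <- ?(proj1 subst_lsub); constructor.
Qed.

Lemma rootB_iff t u : rootB t u <-> rootB' t u.
Proof.
  split; intro H; destruct H.
  - rewrite <- (proj1 mlift_mlower t 0 H) at 1.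
    rewrite (proj1 mlift_mren). constructor.
  - rewrite <- shift_from_0, <- (proj1 mlift_mren).
    rewrite <- (proj1 mlower_mlift t 0) at 2. constructor. apply mfree_mlift.
Qed.

Lemma mlower_ssub_rename a c :
  mlower_c 0 (ssub_c 0 (S a) Hole c) = mren_c (rename_top a) c.
Proof.
  rewrite (proj2 mlower_mren), (proj2 ssub_msub), unshift_from_0.
  replace (th_single 0 (S a) Hole)
    with (fun x => ((fun n => match n with 0 => S a | S m => S m end) x, Hole))
    by (extensionality x; destruct x; reflexivity).
  rewrite (proj2 msub_renaming), (proj2 mren_mren).
  f_equal. extensionality x; destruct x; reflexivity.
Qed.

Lemma rootBc_iff c d : rootB_c c d <-> rootBc' c d.
Proof.
  split; intro H; destruct H;
    [rewrite mlower_ssub_rename | rewrite <- mlower_ssub_rename]; constructor.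
Qed.

Scheme compat_min := Minimality for compat Sort Prop
  with compat_c_min := Minimality for compat_c Sort Prop.
Combined Scheme compat_mind from compat_min, compat_c_min.

Lemma compat_mono (R R' : tm -> tm -> Prop) (Rc Rc' : cmd -> cmd -> Prop) :
  (forall t u, R t u -> R' t u) -> (forall c d, Rc c d -> Rc' c d) ->
  forall t u, compat R Rc t u -> compat R' Rc' t u.
Proof.
  intros HR HRc t u H.
  refine (proj1 (compat_mind R Rc (compat R' Rc') (compat_c R' Rc')
                   _ _ _ _ _ _ _ _ _ _ _) t u H);
    eauto using compat, compat_c.
Qed.

Lemma compat_iff (R R' : tm -> tm -> Prop) (Rc Rc' : cmd -> cmd -> Prop) :
  (forall t u, R t u <-> R' t u) -> (forall c d, Rc c d <-> Rc' c d) ->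
  forall t u, compat R Rc t u <-> compat R' Rc' t u.
Proof.
  intros HR HRc t u; split; apply compat_mono; firstorder.
Qed.

Definition stepA' : tm -> tm -> Prop := compat rootA' rootA_c.
Definition stepAc' : cmd -> cmd -> Prop := compat_c rootA' rootA_c.
Definition stepB' : tm -> tm -> Prop := compat rootB' rootBc'.
Definition stepBc' : cmd -> cmd -> Prop := compat_c rootB' rootBc'.
Definition stepAB' (t u : tm) : Prop := stepA' t u \/ stepB' t u.
Definition stepABc' (c d : cmd) : Prop := stepAc' c d \/ stepBc' c d.
Definition redAB' : tm -> tm -> Prop := clos_refl_trans tm stepAB'.
Definition redABc' : cmd -> cmd -> Prop := clos_refl_trans cmd stepABc'.
Definition redB' : tm -> tm -> Prop := clos_refl_trans tm stepB'.
Definition redBc' : cmd -> cmd -> Prop := clos_refl_trans cmd stepBc'.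

Lemma stepA_iff t u : stepA t u <-> stepA' t u.
Proof. apply compat_iff; [apply rootA_iff | reflexivity]. Qed.

Lemma stepB_iff t u : stepB t u <-> stepB' t u.
Proof. apply compat_iff; [apply rootB_iff | apply rootBc_iff]. Qed.

Lemma redAB_of_redAB' t u : redAB' t u -> redAB t u.
Proof.
  induction 1 as [x y [H | H] | | ].
  - apply rt_step; left; apply stepA_iff; assumption.
  - apply rt_step; right; apply stepB_iff; assumption.
  - apply rt_refl.
  - eapply rt_trans; eassumption.
Qed.

Lemma rt_map {A B} (R : A -> A -> Prop) (R' : B -> B -> Prop) (f : A -> B) :
  (forall x y, R x y -> R' (f x) (f y)) ->
  forall x y, clos_refl_trans A R x y -> clos_refl_trans B R' (f x) (f y).
Proof.
  intros Hf x y H; induction H; eauto using rt_step, rt_refl, rt_trans.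
Qed.

Ltac congruence_rt :=
  intros;
  unfold redAB', redABc', redB', redBc', stepAB', stepABc',
    stepA', stepB', stepAc', stepBc' in *;
  match goal with H : clos_refl_trans _ _ _ _ |- _ =>
    refine (rt_map _ _ _ _ _ _ H);
    first [ intros ? ? [? | ?]; [left | right]; constructor; assumption
          | intros; constructor; assumption ]
  end.

Lemma redAB_lam t u : redAB' t u -> redAB' (lam t) (lam u). Proof. congruence_rt. Qed.
Lemma redAB_appl t u s : redAB' t u -> redAB' (app t s) (app u s). Proof. congruence_rt. Qed.
Lemma redAB_appr t u s : redAB' t u -> redAB' (app s t) (app s u). Proof. congruence_rt. Qed.
Lemma redAB_mu c d : redABc' c d -> redAB' (mu c) (mu d). Proof. congruence_rt. Qed.
Lemma redAB_succ t u : redAB' t u -> redAB' (succ t) (succ u). Proof. congruence_rt. Qed.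
Lemma redAB_nrec1 t u s v : redAB' t u -> redAB' (nrec t s v) (nrec u s v).
Proof. congruence_rt. Qed.
Lemma redAB_nrec2 t u s v : redAB' t u -> redAB' (nrec s t v) (nrec s u v).
Proof. congruence_rt. Qed.
Lemma redAB_nrec3 t u s v : redAB' t u -> redAB' (nrec s v t) (nrec s v u).
Proof. congruence_rt. Qed.
Lemma redABc_named a t u : redAB' t u -> redABc' (named a t) (named a u).
Proof. congruence_rt. Qed.

Lemma redB_lam t u : redB' t u -> redB' (lam t) (lam u). Proof. congruence_rt. Qed.
Lemma redB_appl t u s : redB' t u -> redB' (app t s) (app u s). Proof. congruence_rt. Qed.
Lemma redB_appr t u s : redB' t u -> redB' (app s t) (app s u). Proof. congruence_rt. Qed.
Lemma redB_mu c d : redBc' c d -> redB' (mu c) (mu d). Proof. congruence_rt. Qed.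
Lemma redB_succ t u : redB' t u -> redB' (succ t) (succ u). Proof. congruence_rt. Qed.
Lemma redB_nrec1 t u s v : redB' t u -> redB' (nrec t s v) (nrec u s v).
Proof. congruence_rt. Qed.
Lemma redB_nrec2 t u s v : redB' t u -> redB' (nrec s t v) (nrec s u v).
Proof. congruence_rt. Qed.
Lemma redB_nrec3 t u s v : redB' t u -> redB' (nrec s v t) (nrec s v u).
Proof. congruence_rt. Qed.
Lemma redBc_named a t u : redB' t u -> redBc' (named a t) (named a u).
Proof. congruence_rt. Qed.

Lemma redAB_plug E u v : redAB' u v -> redAB' (plug E u) (plug E v).
Proof. induction E; simpl; auto using redAB_appl, redAB_succ, redAB_nrec3. Qed.

Lemma stepA_plug E u v : stepA' u v -> stepA' (plug E u) (plug E v).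
Proof.
  unfold stepA'; induction E; simpl; intros; auto;
    [apply c_appl | apply c_succ | apply c_nrec3]; auto.
Qed.

Lemma A_AB t u : stepA' t u -> redAB' t u.
Proof. intros; apply rt_step; left; assumption. Qed.
Lemma B_AB t u : stepB' t u -> redAB' t u.
Proof. intros; apply rt_step; right; assumption. Qed.
Lemma Bc_ABc c d : stepBc' c d -> redABc' c d.
Proof. intros; apply rt_step; right; assumption. Qed.
Lemma redB_AB t u : redB' t u -> redAB' t u.
Proof.
  induction 1; [apply B_AB | apply rt_refl | eapply rt_trans]; eassumption.
Qed.

Lemma ren_stepB :
  (forall t u, stepB' t u -> forall xi, stepB' (ren xi t) (ren xi u)) /\
  (forall c d, stepBc' c d -> forall xi, stepBc' (ren_c xi c) (ren_c xi d)).
Proof.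
  unfold stepB', stepBc'; apply compat_mind; intros; simpl;
    try (constructor; auto; fail).
  - destruct H; simpl. rewrite (proj1 ren_mren). do 2 constructor.
  - destruct H; simpl. rewrite (proj2 ren_mren). do 2 constructor.
Qed.

Lemma mren_stepB :
  (forall t u, stepB' t u -> forall z, stepB' (mren z t) (mren z u)) /\
  (forall c d, stepBc' c d -> forall z, stepBc' (mren_c z c) (mren_c z d)).
Proof.
  unfold stepB', stepBc'; apply compat_mind; intros; simpl;
    try (constructor; auto; fail).
  - destruct H; simpl. rewrite (proj1 mren_mren).
    change (fun n => up_ren z (S n)) with (fun n => S (z n)).
    rewrite <- (proj1 mren_mren t S z). do 2 constructor.
  - destruct H; simpl. rewrite (proj2 mren_mren c z (rename_top a)).
    replace (fun n => z (rename_top a n)) with (fun n => rename_top (z a) (up_ren z n))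
      by (extensionality n; destruct n; reflexivity).
    rewrite <- (proj2 mren_mren c (rename_top (z a)) (up_ren z)). do 2 constructor.
Qed.

Lemma lsub_stepB :
  (forall t u, stepB' t u -> forall s, stepB' (lsub s t) (lsub s u)) /\
  (forall c d, stepBc' c d -> forall s, stepBc' (lsub_c s c) (lsub_c s d)).
Proof.
  unfold stepB', stepBc'; apply compat_mind; intros; simpl;
    try (constructor; auto; fail).
  - destruct H; simpl. rewrite <- (proj1 mren_lsub). do 2 constructor.
  - destruct H; simpl.
    replace (lsub_c s (mren_c (rename_top a) c))
      with (mren_c (rename_top a) (lsub_c (fun n => mren S (s n)) c)).
    + do 2 constructor.
    + rewrite (proj2 mren_lsub). f_equal. extensionality n.
      rewrite (proj1 mren_mren). apply (proj1 mren_id).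
Qed.

Lemma ren_redB xi t u : redB' t u -> redB' (ren xi t) (ren xi u).
Proof. apply rt_map. intros; apply ren_stepB; assumption. Qed.

Lemma mren_redB z t u : redB' t u -> redB' (mren z t) (mren z u).
Proof. apply rt_map. intros; apply mren_stepB; assumption. Qed.

Lemma lsub_redB :
  (forall t s s', (forall n, redB' (s n) (s' n)) -> redB' (lsub s t) (lsub s' t)) /\
  (forall c s s', (forall n, redB' (s n) (s' n)) -> redBc' (lsub_c s c) (lsub_c s' c)).
Proof.
  apply tm_cmd_ind; intros; simpl; auto; try apply rt_refl.
  - apply redB_lam, H. intros [|n]; simpl; [apply rt_refl | apply ren_redB; auto].
  - eapply rt_trans; [apply redB_appl; eauto | apply redB_appr; eauto].
  - apply redB_mu, H. intros; apply mren_redB; auto.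
  - apply redB_succ; eauto.
  - eapply rt_trans; [apply redB_nrec1; eauto |].
    eapply rt_trans; [apply redB_nrec2; eauto | apply redB_nrec3; eauto].
  - apply redBc_named; eauto.
Qed.

Lemma beta_sub_redB r r' : redB' r r' -> forall n, redB' (beta_sub 0 r n) (beta_sub 0 r' n).
Proof. intros H [|n]; simpl; [assumption | apply rt_refl]. Qed.

Inductive ctx_redB : ctx -> ctx -> Prop :=
| cR_hole : ctx_redB Hole Hole
| cR_app E E' t t' : ctx_redB E E' -> redB' t t' -> ctx_redB (CApp E t) (CApp E' t')
| cR_succ E E' : ctx_redB E E' -> ctx_redB (CSucc E) (CSucc E')
| cR_nrec r r' s s' E E' :
    redB' r r' -> redB' s s' -> ctx_redB E E' -> ctx_redB (CNrec r s E) (CNrec r' s' E').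

Lemma ctx_redB_refl E : ctx_redB E E.
Proof. induction E; constructor; auto; apply rt_refl. Qed.

Lemma ctx_redB_plug E E' u u' : ctx_redB E E' -> redB' u u' -> redB' (plug E u) (plug E' u').
Proof.
  intros H; revert u u'; induction H; simpl; intros; auto.
  - eapply rt_trans; [apply redB_appl; eauto | apply redB_appr; eauto].
  - apply redB_succ; eauto.
  - eapply rt_trans; [apply redB_nrec1; eauto |].
    eapply rt_trans; [apply redB_nrec2; eauto | apply redB_nrec3; eauto].
Qed.

Lemma ctx_redB_ren xi E E' : ctx_redB E E' -> ctx_redB (renE xi E) (renE xi E').
Proof. induction 1; simpl; constructor; auto using ren_redB. Qed.

Lemma ctx_redB_mren z E E' : ctx_redB E E' -> ctx_redB (mrenE z E) (mrenE z E').
Proof. induction 1; simpl; constructor; auto using mren_redB. Qed.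

Definition th_redB (th th' : nat -> nat * ctx) : Prop :=
  forall a, fst (th a) = fst (th' a) /\ ctx_redB (snd (th a)) (snd (th' a)).

Lemma msub_redB :
  (forall t th th', th_redB th th' -> redB' (msub th t) (msub th' t)) /\
  (forall c th th', th_redB th th' -> redBc' (msub_c th c) (msub_c th' c)).
Proof.
  unfold th_redB; apply tm_cmd_ind; intros; simpl; auto; try apply rt_refl.
  - apply redB_lam, H. intros a; unfold th_lam; simpl.
    destruct (H0 a); split; auto using ctx_redB_ren.
  - eapply rt_trans; [apply redB_appl; eauto | apply redB_appr; eauto].
  - apply redB_mu, H. intros [|a]; simpl; [split; auto; constructor |].
    destruct (H0 a); split; auto using ctx_redB_mren.
  - apply redB_succ; eauto.
  - eapply rt_trans; [apply redB_nrec1; eauto |].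
    eapply rt_trans; [apply redB_nrec2; eauto | apply redB_nrec3; eauto].
  - destruct (H0 a) as [Ha HE]. rewrite Ha. apply redBc_named, ctx_redB_plug; auto.
Qed.

Lemma msub_top_redB E E' c :
  ctx_redB E E' -> redBc' (msub_c (th_top E) c) (msub_c (th_top E') c).
Proof.
  intros HE. apply msub_redB.
  intros [|a]; simpl; split; auto using ctx_redB_refl.
Qed.

Lemma mren_numeral z n : mren z (numeral n) = numeral n.
Proof. induction n; simpl; congruence. Qed.

Lemma mren_th_top z F c :
  mren_c (up_ren z) (msub_c (th_top F) c)
  = msub_c (th_top (mrenE (up_ren z) F)) (mren_c (up_ren z) c).
Proof.
  rewrite (proj2 mren_msub), (proj2 msub_mren). f_equal.
  extensionality a. destruct a; reflexivity.
Qed.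

Lemma mren_beta_sub z r : (fun n => mren z (beta_sub 0 r n)) = beta_sub 0 (mren z r).
Proof. extensionality n; destruct n; reflexivity. Qed.

Lemma mren_up_shift z t : mren (up_ren z) (mren S t) = mren S (mren z t).
Proof. rewrite !(proj1 mren_mren). reflexivity. Qed.

Lemma mren_rootA z t u : rootA' t u -> rootA' (mren z t) (mren z u).
Proof.
  destruct 1; simpl; rewrite ?mren_th_top; simpl;
    rewrite ?mren_up_shift, ?mren_numeral.
  all: rewrite ?(proj1 mren_lsub), ?mren_beta_sub; constructor.
Qed.

Lemma mren_stepA :
  (forall t u, stepA' t u -> forall z, stepA' (mren z t) (mren z u)) /\
  (forall c d, stepAc' c d -> forall z, stepAc' (mren_c z c) (mren_c z d)).
Proof.
  unfold stepA', stepAc'; apply compat_mind; intros; simpl;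
    try (constructor; auto; fail).
  - constructor. apply mren_rootA; assumption.
  - destruct H.
Qed.

Lemma mren_numeral_inv z n : forall t, numeral n = mren z t -> t = numeral n.
Proof.
  induction n; intros t; destruct t; simpl; intro H; inversion H; subst;
    f_equal; eauto.
Qed.

Lemma mren_rootA_refl z t u :
  rootA' (mren z t) u -> exists t', rootA' t t' /\ mren z t' = u.
Proof.
  intros H; destruct t; simpl in H; inversion H; subst.
  all: match goal with Hq : _ = mren _ ?x |- _ =>
         destruct x; simpl in Hq; inversion Hq; subst end.
  all: try match goal with Hq : numeral _ = mren _ _ |- _ =>
             apply mren_numeral_inv in Hq; subst end.
  all: eexists; split; [constructor |].
  all: simpl; rewrite ?(proj1 mren_lsub), ?mren_beta_sub, ?mren_th_top; simpl;
         rewrite ?mren_up_shift, ?mren_numeral; reflexivity.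
Qed.

Lemma mren_stepA_refl :
  (forall t z u, stepA' (mren z t) u -> exists t', stepA' t t' /\ mren z t' = u) /\
  (forall c z d, stepAc' (mren_c z c) d -> exists c', stepAc' c c' /\ mren_c z c' = d).
Proof.
  unfold stepA', stepAc'; apply tm_cmd_ind; intros; simpl in *.
  all: match goal with
       | Hs : compat _ _ _ _ |- _ => inversion Hs; subst
       | Hs : compat_c _ _ _ _ |- _ => inversion Hs; subst
       end.
  all: try match goal with
       | Hr : rootA' _ ?u |- exists t', compat _ _ ?t t' /\ mren ?z t' = ?u =>
           destruct (mren_rootA_refl z t u Hr) as [t' [Ht' Heq]];
           exists t'; split; [constructor |]; assumption
       | Hr : rootA_c _ _ |- _ => destruct Hr
       end.
  all: match goal with
       | IH : forall z u, compat _ _ (mren z ?x) u -> _,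
         Hs : compat _ _ (mren ?z ?x) ?u |- _ =>
           destruct (IH z u Hs) as [x' [Hx' Heq]]
       | IH : forall z u, compat_c _ _ (mren_c z ?x) u -> _,
         Hs : compat_c _ _ (mren_c ?z ?x) ?u |- _ =>
           destruct (IH z u Hs) as [x' [Hx' Heq]]
       end.
  all: subst; eexists; split; [constructor; eassumption | reflexivity].
Qed.

(* A context is built from
   single frames E ::= [] t | S [] | nrec r s []; each frame is absorbed by
   one A-step, so E[mu a.c] A-reduces to mu a.c[a := a E], and the first of
   these steps is an A-step whenever E is not empty. *)
Inductive frame : ctx -> Prop :=
| fr_app t : frame (CApp Hole t)
| fr_succ : frame (CSucc Hole)
| fr_nrec r s : frame (CNrec r s Hole).

Lemma ctx_frame_ind (P : ctx -> Prop) :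
  P Hole -> (forall F E, frame F -> P E -> P (ccomp F E)) -> forall E, P E.
Proof.
  intros H0 HF E; induction E.
  - exact H0.
  - exact (HF (CApp Hole t) E (fr_app t) IHE).
  - exact (HF (CSucc Hole) E fr_succ IHE).
  - exact (HF (CNrec r s Hole) E (fr_nrec r s) IHE).
Qed.

Lemma ctx_inner_frame E : E = Hole \/ exists E' F, frame F /\ E = ccomp E' F.
Proof.
  induction E as [| F E HF [-> | [E' [F' [HF' ->]]]]] using ctx_frame_ind.
  - left; reflexivity.
  - right; exists Hole, F; split; [assumption | simpl; apply ccomp_Hole].
  - right; exists (ccomp F E'), F'; split; [assumption | symmetry; apply ccomp_assoc].
Qed.

Lemma rootA_frame F c :
  frame F -> rootA' (plug F (mu c)) (mu (msub_c (th_top (mrenE S F)) c)).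
Proof. destruct 1; constructor. Qed.

Lemma th_top_Hole c : msub_c (th_top Hole) c = c.
Proof.
  replace (th_top Hole) with (fun a : nat => ((fun n : nat => n) a, Hole))
    by (extensionality a; destruct a; reflexivity).
  rewrite (proj2 msub_renaming). apply mren_id.
Qed.

Lemma msub_top_top E F c :
  msub_c (th_top (mrenE S F)) (msub_c (th_top (mrenE S E)) c)
  = msub_c (th_top (mrenE S (ccomp F E))) c.
Proof.
  rewrite (proj2 msub_msub), mrenE_ccomp. f_equal.
  extensionality a; destruct a; unfold th_comp; simpl; [| reflexivity].
  rewrite msubE_mren. f_equal. f_equal. apply (msubE_renaming S).
Qed.

Lemma push_mu E c : redAB' (plug E (mu c)) (mu (msub_c (th_top (mrenE S E)) c)).
Proof.
  induction E as [| F E HF IH] using ctx_frame_ind.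
  - simpl. rewrite th_top_Hole. apply rt_refl.
  - rewrite plug_ccomp, <- msub_top_top.
    eapply rt_trans; [apply redAB_plug, IH |].
    apply A_AB; constructor; apply rootA_frame; assumption.
Qed.

Lemma push_mu_step E c : E <> Hole ->
  exists t4, stepA' (plug E (mu c)) t4 /\
             redAB' t4 (mu (msub_c (th_top (mrenE S E)) c)).
Proof.
  intros HE. destruct (ctx_inner_frame E) as [-> | [E' [F [HF ->]]]];
    [congruence |].
  exists (plug E' (mu (msub_c (th_top (mrenE S F)) c))). split.
  - rewrite plug_ccomp. apply stepA_plug. constructor. apply rootA_frame; assumption.
  - rewrite <- msub_top_top. apply push_mu.
Qed.

Lemma msub_eta th t :
  stepB' (msub th (mu (named 0 (mren S t)))) (msub th t).
Proof.
  simpl. rewrite (proj1 msub_mren).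
  replace (msub (fun a => th_mu th (S a)) t) with (mren S (msub th t))
    by (rewrite (proj1 mren_msub); reflexivity).
  do 2 constructor.
Qed.

(* A renaming redex [a]mu b.c becomes [b']E[mu b.c] under a structural
   substitution sending a to (b', E); once E is absorbed by the mu, it is a
   renaming redex whose contractum is the substituted contractum. *)
Lemma msub_rename th a c b E :
  th a = (b, E) ->
  stepBc' (named b (mu (msub_c (th_top (mrenE S E)) (msub_c (th_mu th) c))))
          (msub_c th (mren_c (rename_top a) c)).
Proof.
  intros Ha.
  replace (msub_c th (mren_c (rename_top a) c))
    with (mren_c (rename_top b) (msub_c (th_top (mrenE S E)) (msub_c (th_mu th) c))).
  { do 2 constructor. }
  rewrite (proj2 msub_msub), (proj2 mren_msub), (proj2 msub_mren). f_equal.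
  extensionality x; destruct x; unfold th_comp, th_mren; simpl.
  - rewrite ccomp_Hole, Ha, mrenE_mren. simpl. rewrite mrenE_id. reflexivity.
  - destruct (th x) as [b' E']; simpl. rewrite msubE_mren. simpl.
    rewrite (msubE_renaming S), mrenE_mren. simpl. rewrite mrenE_id. reflexivity.
Qed.

Lemma msub_stepB :
  (forall t u, stepB' t u -> forall th, redAB' (msub th t) (msub th u)) /\
  (forall c d, stepBc' c d -> forall th, redABc' (msub_c th c) (msub_c th d)).
Proof.
  unfold stepB', stepBc'; apply compat_mind; intros; simpl;
    eauto using redAB_lam, redAB_appl, redAB_appr, redAB_mu, redAB_succ,
      redAB_nrec1, redAB_nrec2, redAB_nrec3, redABc_named, redAB_plug.
  - destruct H. apply B_AB, msub_eta.
  - destruct H; simpl. destruct (th a) as [b E] eqn:Ha; simpl.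
    eapply rt_trans; [apply redABc_named, push_mu |].
    apply Bc_ABc, msub_rename; assumption.
Qed.

Definition commutes (t1 t2 : tm) : Prop :=
  forall t3, stepA' t2 t3 -> exists t4, stepA' t1 t4 /\ redAB' t4 t3.
Definition commutes_c (c1 c2 : cmd) : Prop :=
  forall c3, stepAc' c2 c3 -> exists c4, stepAc' c1 c4 /\ redABc' c4 c3.

Ltac invA HA :=
  unfold stepA', stepAc' in HA; inversion HA; subst;
  try match goal with Hr : rootA' _ _ |- _ => inversion Hr; subst end;
  try match goal with Hr : rootA_c _ _ |- _ => inversion Hr end.

Ltac apply_IH IH x4 :=
  match goal with
  | Hs : compat _ _ _ _ |- _ => destruct (IH _ Hs) as [x4 [? ?]]
  | Hs : compat_c _ _ _ _ |- _ => destruct (IH _ Hs) as [x4 [? ?]]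
  end.

(* Eta-step at the root: the A-step is performed under mu 0.[0](-). *)
Lemma commute_eta t : commutes (mu (named 0 (mren S t))) t.
Proof.
  intros t3 HA. exists (mu (named 0 (mren S t3))). split.
  - apply c_mu, cc_named, (proj1 mren_stepA), HA.
  - apply B_AB. do 2 constructor.
Qed.

(* Eta-step below a non-empty context E: pull the mu out of E, perform the
   A-step inside it, and contract the eta-redex at the end. *)
Lemma commute_eta_in_ctx E x :
  E <> Hole -> commutes (plug E (mu (named 0 (mren S x)))) (plug E x).
Proof.
  intros HE t3 HA.
  destruct (push_mu_step E (named 0 (mren S x)) HE) as [t4 [Hstep Hred]].
  exists t4; split; [exact Hstep |].
  eapply rt_trans; [exact Hred |]. simpl.
  rewrite (proj1 msub_mren).
  change (fun a => th_top (mrenE S E) (S a)) with (fun a => (S a, Hole)).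
  rewrite (proj1 msub_renaming x S), <- plug_mren.
  eapply rt_trans.
  - apply A_AB, c_mu, cc_named, (proj1 mren_stepA), HA.
  - apply B_AB. do 2 constructor.
Qed.

(* Renaming step at the root: A-steps are reflected by the renaming. *)
Lemma commute_rename a c : commutes_c (named a (mu c)) (mren_c (rename_top a) c).
Proof.
  intros c3 HA.
  destruct (proj2 mren_stepA_refl c (rename_top a) c3 HA) as [c1 [H1 <-]].
  exists (named a (mu c1)). split.
  - apply cc_named, c_mu, H1.
  - apply Bc_ABc. do 2 constructor.
Qed.

(* Under a binder or a command the A-step can only happen inside. *)
Lemma commute_lam t t' : commutes t t' -> commutes (lam t) (lam t').
Proof.
  intros IH t3 HA. invA HA.
  apply_IH IH t4.
  exists (lam t4); split; [apply c_lam | apply redAB_lam]; assumption.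
Qed.

Lemma commute_mu c c' : commutes_c c c' -> commutes (mu c) (mu c').
Proof.
  intros IH t3 HA. invA HA.
  apply_IH IH c4.
  exists (mu c4); split; [apply c_mu | apply redAB_mu]; assumption.
Qed.

Lemma commute_named a t t' : commutes t t' -> commutes_c (named a t) (named a t').
Proof.
  intros IH c3 HA. invA HA.
  apply_IH IH t4.
  exists (named a t4); split; [apply cc_named | apply redABc_named]; assumption.
Qed.

Ltac eta_below F :=
  match goal with HA : compat rootA' _ _ ?t3 |- _ =>
    exact (commute_eta_in_ctx F _ ltac:(discriminate) t3 HA)
  end.

Lemma commute_appl x x' s :
  stepB' x x' -> commutes x x' -> commutes (app x s) (app x' s).
Proof.
  intros Hb IH t3 HA. invA HA.
  -
    inversion Hb as [? ? Hr | t1 ? HB | | | | | | | ]; subst;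
      [inversion Hr; subst; eta_below (CApp Hole s) |].
    eexists; split; [do 2 constructor |].
    apply B_AB, lsub_stepB, HB.
  -
    inversion Hb as [? ? Hr | | | | c1 ? HB | | | | ]; subst;
      [inversion Hr; subst; eta_below (CApp Hole s) |].
    eexists; split; [do 2 constructor |].
    apply redAB_mu, msub_stepB, HB.
  - apply_IH IH t4.
    exists (app t4 s); split; [apply c_appl | apply redAB_appl]; assumption.
  - eexists; split; [apply c_appr; eassumption |].
    apply B_AB, c_appl, Hb.
Qed.

Lemma commute_appr t s s' :
  stepB' s s' -> commutes s s' -> commutes (app t s) (app t s').
Proof.
  intros Hb IH t3 HA. invA HA.
  - (* the argument is substituted *)
    eexists; split; [do 2 constructor |].
    apply redB_AB, lsub_redB, beta_sub_redB, rt_step, Hb.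
  -
    eexists; split; [do 2 constructor |].
    apply redB_AB, redB_mu, msub_top_redB.
    constructor; [constructor | apply mren_redB, rt_step, Hb].
  - eexists; split; [apply c_appl; eassumption |].
    apply B_AB, c_appr, Hb.
  - apply_IH IH t4.
    exists (app t t4); split; [apply c_appr | apply redAB_appr]; assumption.
Qed.

Lemma commute_succ x x' :
  stepB' x x' -> commutes x x' -> commutes (succ x) (succ x').
Proof.
  intros Hb IH t3 HA. invA HA.
  - inversion Hb as [? ? Hr | | | | c1 ? HB | | | | ]; subst;
      [inversion Hr; subst; eta_below (CSucc Hole) |].
    eexists; split; [do 2 constructor |].
    apply redAB_mu, msub_stepB, HB.
  - apply_IH IH t4.
    exists (succ t4); split; [apply c_succ | apply redAB_succ]; assumption.
Qed.

Lemma commute_nrec1 r r' s t :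
  stepB' r r' -> commutes r r' -> commutes (nrec r s t) (nrec r' s t).
Proof.
  intros Hb IH t3 HA. invA HA.
  - eexists; split; [do 2 constructor | apply B_AB, Hb].
  - eexists; split; [do 2 constructor |].
    apply B_AB, c_appr, c_nrec1, Hb.
  - eexists; split; [do 2 constructor |].
    apply redB_AB, redB_mu, msub_top_redB.
    constructor; [apply mren_redB, rt_step, Hb | apply rt_refl | constructor].
  - apply_IH IH t4.
    exists (nrec t4 s t); split; [apply c_nrec1 | apply redAB_nrec1]; assumption.
  - eexists; split; [apply c_nrec2; eassumption | apply B_AB, c_nrec1, Hb].
  - eexists; split; [apply c_nrec3; eassumption | apply B_AB, c_nrec1, Hb].
Qed.

Lemma commute_nrec2 r s s' t :
  stepB' s s' -> commutes s s' -> commutes (nrec r s t) (nrec r s' t).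
Proof.
  intros Hb IH t3 HA. invA HA.
  - eexists; split; [do 2 constructor | apply rt_refl].
  - (* the step function is duplicated *)
    eexists; split; [do 2 constructor |].
    eapply rt_trans; apply B_AB; [apply c_appl, c_appl, Hb | apply c_appr, c_nrec2, Hb].
  - eexists; split; [do 2 constructor |].
    apply redB_AB, redB_mu, msub_top_redB.
    constructor; [apply rt_refl | apply mren_redB, rt_step, Hb | constructor].
  - eexists; split; [apply c_nrec1; eassumption | apply B_AB, c_nrec2, Hb].
  - apply_IH IH t4.
    exists (nrec r t4 t); split; [apply c_nrec2 | apply redAB_nrec2]; assumption.
  - eexists; split; [apply c_nrec3; eassumption | apply B_AB, c_nrec2, Hb].
Qed.

Lemma stepB_into_numeral n : forall u, stepB' u (numeral n) ->
  exists E x, u = plug E (mu (named 0 (mren S x))) /\ numeral n = plug E x.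
Proof.
  induction n; intros u H; simpl in H; inversion H; subst.
  - match goal with Hr : rootB' _ _ |- _ => inversion Hr; subst end.
    exists Hole, zero; auto.
  - match goal with Hr : rootB' _ _ |- _ => inversion Hr; subst end.
    exists Hole, (succ (numeral n)); auto.
  - match goal with Hs : compat _ _ _ (numeral n) |- _ =>
      destruct (IHn _ Hs) as [E [x [-> Hx]]] end.
    exists (CSucc E), x; simpl; split; congruence.
Qed.

Lemma commute_nrec3 r s t t' :
  stepB' t t' -> commutes t t' -> commutes (nrec r s t) (nrec r s t').
Proof.
  intros Hb IH t3 HA. invA HA.
  - inversion Hb as [? ? Hr | | | | | | | | ]; subst.
    (* nrec r s 0 -> r with the 0 created by eta; r is now named t3 *)
    inversion Hr; subst; eta_below (CNrec t3 s Hole).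
  - inversion Hb as [? ? Hr | | | | | ? ? HB | | | ]; subst;
      [inversion Hr; subst; eta_below (CNrec r s Hole) |].
    destruct (stepB_into_numeral _ _ HB) as [E [x [-> Hx]]].
    pose proof (commute_eta_in_ctx (CNrec r s (CSucc E)) x ltac:(discriminate)) as Heta.
    cbn [plug] in Heta. rewrite <- Hx in Heta. exact (Heta _ HA).
  - inversion Hb as [? ? Hr | | | | c1 ? HB | | | | ]; subst;
      [inversion Hr; subst; eta_below (CNrec r s Hole) |].
    eexists; split; [do 2 constructor |].
    apply redAB_mu, msub_stepB, HB.
  - eexists; split; [apply c_nrec1; eassumption | apply B_AB, c_nrec3, Hb].
  - eexists; split; [apply c_nrec2; eassumption | apply B_AB, c_nrec3, Hb].
  - apply_IH IH t4.
    exists (nrec r s t4); split; [apply c_nrec3 | apply redAB_nrec3]; assumption.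
Qed.

Lemma commute_B_A :
  (forall t1 t2, stepB' t1 t2 -> commutes t1 t2) /\
  (forall c1 c2, stepBc' c1 c2 -> commutes_c c1 c2).
Proof.
  unfold stepB', stepBc'; apply compat_mind; intros.
  - destruct H; apply commute_eta.
  - apply commute_lam; assumption.
  - apply commute_appl; assumption.
  - apply commute_appr; assumption.
  - apply commute_mu; assumption.
  - apply commute_succ; assumption.
  - apply commute_nrec1; assumption.
  - apply commute_nrec2; assumption.
  - apply commute_nrec3; assumption.
  - destruct H; apply commute_rename.
  - apply commute_named; assumption.
Qed.

Lemma postpone_B_step t1 t2 t3 :
  stepB t1 t2 -> stepA t2 t3 -> exists t4, stepA t1 t4 /\ redAB t4 t3.
Proof.
  intros HB HA. apply stepB_iff in HB. apply stepA_iff in HA.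
  destruct (proj1 commute_B_A t1 t2 HB t3 HA) as [t4 [H1 H2]].
  exists t4; split; [apply stepA_iff | apply redAB_of_redAB']; assumption.
Qed.

Theorem mainTheorem16 :
  (forall t1 t2 t3 : tm,
      stepB t1 t2 -> stepA t2 t3 ->
      exists t4, stepA t1 t4 /\ redAB t4 t3) /\
  (forall t1 t2 t3 : tm,
      redB t1 t2 -> stepA t2 t3 ->
      exists t4, stepA t1 t4 /\ redAB t4 t3).
Proof.
  split; [exact postpone_B_step |].
  intros t1 t2 t3 H. apply clos_rt_rt1n in H. revert t3.
  induction H as [| t1 t1' t2 HB _ IH]; intros t3 HA.
  - exists t3; split; [assumption | apply rt_refl].
  - destruct (IH t3 HA) as [t4 [H14 H43]].
    destruct (postpone_B_step _ _ _ HB H14) as [t5 [H15 H54]].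
    exists t5; split; [assumption | eapply rt_trans; eassumption].
Qed.
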